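(* Let $p$ be an odd prime and let $q\in\mathbb C_p$ with $|1-q|_p<p^{-1/(p-1)}$. For every $n\in\mathbb Z_+$, $$\sum_{m=0}^n\binom nm(q-1)^mE_{m,q}=\sum_{m=0}^n\sum_{k=m}^n(q-1)^k\binom nk_q s_{1,q}(k,m)E_{m,q}.$$
   Context: For $x\in\mathbb Z_p$, $[x]_q=\frac{1-q^x}{1-q}$. The fermionic $p$-adic integral of a uniformly differentiable $f:\mathbb Z_p\to\mathbb C_p$ is $\int_{\mathbb Z_p}f(x)\,d\mu_{-1}(x)=\lim_{N\to\infty}\sum_{x=0}^{p^N-1}f(x)(-1)^x$. The $q$-Euler numbers are $E_{n,q}=\int_{\mathbb Z_p}[x]_q^n\,d\mu_{-1}(x)$. $[n]_q!=[n]_q\cdots[1]_q$ ($[0]_q!=1$), $\binom nk_q=\frac{[n]_q!}{[k]_q![n-k]_q!}$. The $q$-Stirling numbers of the first kind $s_{1,q}(k,l)$ are defined by $[x]_q[x-1]_q\cdots[x-k+1]_q=q^{-\binom k2}\sum_{l=0}^k s_{1,q}(k,l)[x]_q^l$ for $k\in\mathbb Z_+$, as an identity of polynomials in $[x]_q$ (using $[x-i]_q=q^{-i}([x]_q-[i]_q)$). *)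

From HB Require Import structures.
From mathcomp Require Import all_boot all_order all_algebra.
From mathcomp Require Import reals.
From Stdlib Require Import ClassicalEpsilon.
Set Implicit Arguments. Unset Strict Implicit. Unset Printing Implicit Defensive.
Import Order.TTheory GRing.Theory Num.Theory.
Local Open Scope ring_scope.

(* We model it as an algebraically closed field K
   equipped with an absolute value absv : K -> R (R the reals) which is
   non-archimedean, normalised by |p| = 1/p, and complete. *)
Definition Cp_like (p : nat) (R : realType) (K : closedFieldType)
  (absv : K -> R) : Prop :=
  (forall x, 0 <= absv x) /\
  [/\ forall x, absv x = 0 <-> x = 0,
      forall x y, absv (x * y) = absv x * absv y,
      forall x y, absv (x + y) <= Num.max (absv x) (absv y),
      absv (p%:R) = (p%:R)^-1 &
      forall u : nat -> K,
        (forall e : R, 0 < e -> exists N, forall m k, (N <= m)%N -> (N <= k)%N ->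
            absv (u m - u k) < e) ->
        exists l, forall e : R, 0 < e -> exists N, forall m, (N <= m)%N ->
            absv (u m - l) < e].

Definition cvg_abs (R : realType) (K : closedFieldType) (absv : K -> R)
  (u : nat -> K) (l : K) : Prop :=
  forall e : R, 0 < e -> exists N, forall m, (N <= m)%N -> absv (u m - l) < e.

(* fermionic p-adic integral: lim_N sum_{x=0}^{p^N-1} f(x) (-1)^x
   (the integrand only enters through its values at natural numbers) *)
Definition fermionic_int (R : realType) (K : closedFieldType) (absv : K -> R)
  (p : nat) (f : nat -> K) : K :=
  epsilon (inhabits 0)
    (cvg_abs absv (fun N => \sum_(x < p ^ N) f x * (-1) ^+ x)).

(* [x]_q = (1 - q^x)/(1 - q) for natural x, written as the geometric sum
   1 + q + ... + q^(x-1) (equal for q <> 1, and = x at q = 1) *)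
Definition qnum (K : closedFieldType) (q : K) (x : nat) : K :=
  \sum_(i < x) q ^+ i.

Definition qfact (K : closedFieldType) (q : K) (n : nat) : K :=
  \prod_(i < n) qnum q i.+1.

Definition qbinom (K : closedFieldType) (q : K) (n k : nat) : K :=
  qfact q n / (qfact q k * qfact q (n - k)).

(* q-Stirling numbers of the first kind: [x]_q[x-1]_q...[x-k+1]_q
   = q^{-C(k,2)} sum_l s_{1,q}(k,l) [x]_q^l, with [x-i]_q = q^{-i}([x]_q-[i]_q),
   as polynomials in X = [x]_q *)
Definition s1q (K : closedFieldType) (q : K) (k l : nat) : K :=
  q ^+ 'C(k, 2) * (\prod_(i < k) (q ^- i *: ('X - (qnum q i)%:P))) `_ l.

Definition Eq (R : realType) (K : closedFieldType) (absv : K -> R)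
  (p : nat) (q : K) (m : nat) : K :=
  fermionic_int absv p (fun x => qnum q x ^+ m).

From HB Require Import structures.
From mathcomp Require Import all_boot all_order all_algebra.
From mathcomp Require Import reals.
From mathcomp Require Import ring lra.
Set Implicit Arguments.
Unset Strict Implicit.
Unset Printing Implicit Defensive.

Import Order.TTheory GRing.Theory Num.Theory.
Local Open Scope ring_scope.

(* Write X for [x]_q.  Since (q - 1) X + 1 = q^x and [x]_q - [i]_q = q^i [x - i]_q,
   the q-analogue of Newton's binomial expansion is the polynomial identity
     ((q - 1) X + 1)^n = \sum_k (q - 1)^k [n choose k]_q \prod_(i < k) (X - [i]_q),
   and for q <> 0 the coefficient of X^m in \prod_(i < k) (X - [i]_q) is s_{1,q}(k, m).
   Comparing coefficients of X^m gives
     C(n, m) (q - 1)^m = \sum_k (q - 1)^k [n choose k]_q s_{1,q}(k, m),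
   which is the theorem term by term in E_{m,q}.
   Here [n choose k]_q is given by the q-Pascal rule; it equals
   [n]_q! / ([k]_q! [n - k]_q!) once [j]_q <> 0 for 0 < j <= n, and this is where the
   p-adic hypothesis enters.  Otherwise some power z of q satisfies z <> 1 = z^r with
   r prime and |z - 1| <= |q - 1|; with s = z - 1 this gives
     0 = ((1 + s)^r - 1) / s = r + \sum_(2 <= i <= r) C(r, i) s^(i - 1),
   impossible since every term of the sum is smaller than |r|. *)

Section QCalculus.
Variables (K : closedFieldType) (q : K).

Lemma qnum_subr1 j : (q - 1) * qnum q j = q ^+ j - 1.
Proof. by rewrite subrX1. Qed.

Lemma qnumD a b : qnum q (a + b) = qnum q a + q ^+ a * qnum q b.
Proof.
rewrite /qnum big_split_ord mulr_sumr /=.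
by congr (_ + _); apply: eq_bigr => i _; rewrite exprD.
Qed.

Lemma qfact0 : qfact q 0 = 1.
Proof. by rewrite /qfact big_ord0. Qed.

Lemma qfactS n : qfact q n.+1 = qfact q n * qnum q n.+1.
Proof. by rewrite /qfact big_ord_recr. Qed.

(* The q-Pascal recursion, which makes sense without dividing by q-factorials. *)
Fixpoint gauss_binom n k : K :=
  match n, k with
  | 0, 0 => 1
  | 0, _.+1 => 0
  | n'.+1, 0 => 1
  | n'.+1, k'.+1 => gauss_binom n' k' + q ^+ k'.+1 * gauss_binom n' k'.+1
  end.

Lemma gauss_binom_small n k : (n < k)%N -> gauss_binom n k = 0.
Proof.
elim: n k => [|n IHn] [|k] //= ltnk.
by rewrite !IHn ?mulr0 ?addr0 // ltnW.
Qed.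

Lemma gauss_binom_diag n : gauss_binom n n = 1.
Proof. by elim: n => //= n ->; rewrite gauss_binom_small // mulr0 addr0. Qed.

Lemma gauss_binom_0 n : gauss_binom n 0 = 1.
Proof. by case: n. Qed.

Lemma gauss_binom_qfact n k : (k <= n)%N ->
  gauss_binom n k * qfact q k * qfact q (n - k) = qfact q n.
Proof.
elim: n k => [|n IHn] [|k] //= lekn.
- by rewrite qfact0 !mulr1.
- by rewrite qfact0 !mul1r subn0.
have [ltkn|lenk] := ltnP k n; last first.
  have -> : k = n by apply/eqP; rewrite eqn_leq -ltnS lekn lenk.
  rewrite gauss_binom_diag [gauss_binom n n.+1]gauss_binom_small // subnn.
  by rewrite qfact0 mulr0 addr0 !mulr1 mul1r qfactS.
have nk : (n - k = (n - k.+1).+1)%N by rewrite subnSK.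
have qnum_split : qnum q n.+1 = qnum q k.+1 + q ^+ k.+1 * qnum q (n - k.+1).+1.
  by rewrite -qnumD addnS subnKC.
have left_part : qfact q n * qnum q k.+1 =
    gauss_binom n k * qfact q k.+1 * qfact q (n - k).
  by rewrite -(IHn k) 1?ltnW // qfactS; ring.
have right_part : qfact q n * (q ^+ k.+1 * qnum q (n - k.+1).+1) =
    q ^+ k.+1 * gauss_binom n k.+1 * qfact q k.+1 * qfact q (n - k).
  by rewrite -(IHn k.+1) // nk [qfact q (n - k.+1).+1]qfactS; ring.
by rewrite [qfact q n.+1]qfactS qnum_split mulrDr left_part right_part subSS; ring.
Qed.

Lemma qbinom_gauss n k : (k <= n)%N ->
    (forall j, (0 < j <= n)%N -> qnum q j != 0) ->
  qbinom q n k = gauss_binom n k.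
Proof.
move=> lekn qnum_neq0.
have qfact_neq0 j : (j <= n)%N -> qfact q j != 0.
  by move=> lejn; apply/prodf_neq0 => i _; rewrite qnum_neq0 // (leq_trans _ lejn).
rewrite /qbinom -(gauss_binom_qfact lekn) -[_ * qfact q (n - k)]mulrA mulfK //.
by rewrite mulf_neq0 ?qfact_neq0 ?leq_subr.
Qed.

Definition qfalling k : {poly K} := \prod_(i < k) ('X - (qnum q i)%:P).

Lemma qfallingS k : qfalling k.+1 = qfalling k * ('X - (qnum q k)%:P).
Proof. by rewrite /qfalling big_ord_recr. Qed.

Lemma size_qfalling k : (size (qfalling k) <= k.+1)%N.
Proof.
elim: k => [|k IHk]; first by rewrite /qfalling big_ord0 size_poly1.
rewrite qfallingS (leq_trans (size_polyMleq _ _)) //.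
by rewrite size_XsubC addn2.
Qed.

Lemma s1q_qfalling k m : q != 0 -> s1q q k m = (qfalling k)`_m.
Proof.
move=> q_neq0; rewrite /s1q scaler_prod coefZ mulrA.
suff -> : q ^+ 'C(k, 2) * \prod_(i < k) q ^- i = 1 by rewrite mul1r.
elim: k => [|k IHk]; first by rewrite big_ord0 bin0n expr0 mulr1.
rewrite big_ord_recr /= binS bin1 exprD mulrACA IHk mul1r mulrV //.
by rewrite unitfE expf_neq0.
Qed.

Lemma qshift_mul_qfalling k :
  ((q - 1) *: 'X + 1) * qfalling k = (q - 1) *: qfalling k.+1 + q ^+ k *: qfalling k.
Proof.
rewrite qfallingS -!mul_polyC.
have -> : (q ^+ k)%:P = (q - 1)%:P * (qnum q k)%:P + 1.
  by rewrite -polyCM qnum_subr1 -polyC1 -polyCD subrK.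
ring.
Qed.

Lemma gauss_binom_succ n k : (q - 1) ^+ k.+1 * gauss_binom n.+1 k.+1 =
  (q - 1) * ((q - 1) ^+ k * gauss_binom n k)
  + q ^+ k.+1 * ((q - 1) ^+ k.+1 * gauss_binom n k.+1).
Proof. by rewrite /= exprS; ring. Qed.

Lemma qexp_expansion n : ((q - 1) *: 'X + 1) ^+ n =
  \sum_(k < n.+1) ((q - 1) ^+ k * gauss_binom n k) *: qfalling k.
Proof.
elim: n => [|n IHn].
  by rewrite big_ord1 expr0 mulr1 /qfalling big_ord0 scale1r.
rewrite exprS IHn mulr_sumr.
under eq_bigr do rewrite -scalerAr qshift_mul_qfalling scalerDr !scalerA.
rewrite big_split /= [in RHS]big_ord_recl /=.
under [in RHS]eq_bigr => i _ do rewrite /bump /= add1n gauss_binom_succ scalerDl.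
rewrite big_split /= addrCA; congr (_ + _).
  by apply: eq_bigr => i _; rewrite mulrC.
rewrite big_ord_recl [in RHS]big_ord_recr /=.
rewrite [gauss_binom n n.+1]gauss_binom_small // !mulr0 scale0r addr0.
congr (_ + _); first by rewrite gauss_binom_0 !expr0 !mulr1.
by apply: eq_bigr => i _; rewrite /bump /= add1n mulrC.
Qed.

Lemma coef_qshift_exp n m : (m <= n)%N ->
  (((q - 1) *: 'X + 1) ^+ n)`_m = 'C(n, m)%:R * (q - 1) ^+ m.
Proof.
move=> lemn; rewrite exprD1n coef_sum (bigD1 (Ordinal (lemn : (m < n.+1)%N))) //=.
rewrite big1 ?addr0 => [|i neq_im]; rewrite coefMn exprZn coefZ coefXn.
  by rewrite eqxx mulr1 mulr_natl.
have -> : (m == i) = false by rewrite eq_sym; exact: negPf neq_im.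
by rewrite mulr0 mul0rn.
Qed.

Lemma binomial_qstirling_coef n m : (m <= n)%N -> q != 0 ->
    (forall j, (0 < j <= n)%N -> qnum q j != 0) ->
  'C(n, m)%:R * (q - 1) ^+ m =
  \sum_(m <= k < n.+1) (q - 1) ^+ k * qbinom q n k * s1q q k m.
Proof.
move=> lemn q_neq0 qnum_neq0.
rewrite -coef_qshift_exp // qexp_expansion coef_sum.
rewrite -(big_mkord xpredT
  (fun k => (((q - 1) ^+ k * gauss_binom n k) *: qfalling k)`_m)).
rewrite (big_cat_nat (leq0n m)) ?leqW //= big_nat_cond big1 ?add0r.
  apply: eq_big_nat => k /andP[lemk ltkn].
  by rewrite coefZ s1q_qfalling // qbinom_gauss.
move=> k /andP[/andP[_ ltkm] _].
by rewrite coefZ nth_default ?mulr0 // (leq_trans (size_qfalling k)).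
Qed.

End QCalculus.

Lemma root1_prime_order_pow (R : pzRingType) (x : R) j :
    (0 < j)%N -> x ^+ j = 1 -> x != 1 ->
  exists2 r, prime r & exists e, x ^+ e != 1 /\ (x ^+ e) ^+ r = 1.
Proof.
elim/ltn_ind: j => j IHj j_gt0 xj x_neq1.
have j_gt1 : (1 < j)%N.
  rewrite ltn_neqAle eq_sym j_gt0 andbT.
  by apply: contra_neq x_neq1 => j1; rewrite -xj j1.
set r := pdiv j; set e := (j %/ r)%N.
have j_eq : j = (e * r)%N by rewrite divnK ?pdiv_dvd.
have [xe|xe_neq1] := eqVneq (x ^+ e) 1; last first.
  by exists r; [exact: pdiv_prime | exists e; rewrite -exprM -j_eq].
apply: IHj xe x_neq1; first exact: ltn_Pdiv (prime_gt1 (pdiv_prime j_gt1)) j_gt0.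
by rewrite divn_gt0 ?pdiv_gt0 // dvdn_leq // pdiv_dvd.
Qed.

Section CpAbsoluteValue.
Variables (R : realType) (K : closedFieldType) (absv : K -> R) (p : nat).
Hypotheses (Cp : Cp_like p absv) (p_prime : prime p).

Lemma absv_ge0 x : 0 <= absv x.
Proof. by case: Cp. Qed.

Lemma absv_eq0 x : absv x = 0 <-> x = 0.
Proof. by case: Cp => _ []. Qed.

Lemma absvM x y : absv (x * y) = absv x * absv y.
Proof. by case: Cp => _ []. Qed.

Lemma absvD_le_max x y : absv (x + y) <= Num.max (absv x) (absv y).
Proof. by case: Cp => _ []. Qed.

Lemma absv_p : absv p%:R = p%:R^-1.
Proof. by case: Cp => _ []. Qed.

Lemma absv0 : absv 0 = 0.
Proof. exact/absv_eq0. Qed.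

Lemma absv1 : absv 1 = 1.
Proof.
have absv1_neq0 : absv 1 != 0 by apply/eqP => /absv_eq0/eqP; rewrite oner_eq0.
by apply: (mulfI absv1_neq0); rewrite -absvM !mulr1.
Qed.

Lemma absvN x : absv (- x) = absv x.
Proof.
suff absvN1 : absv (-1) = 1 by rewrite -mulN1r absvM absvN1 mul1r.
have : absv (-1) ^+ 2 == 1 by rewrite expr2 -absvM mulrNN mulr1 absv1.
rewrite sqrf_eq1 => /orP[/eqP //|/eqP absvN1].
by have := absv_ge0 (-1); rewrite absvN1; lra.
Qed.

Lemma absvX x n : absv (x ^+ n) = absv x ^+ n.
Proof. by elim: n => [|n IHn]; rewrite ?absv1 // !exprS absvM IHn. Qed.

Lemma absvD_le x y B : absv x <= B -> absv y <= B -> absv (x + y) <= B.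
Proof. by move=> xB yB; rewrite (le_trans (absvD_le_max x y)) // ge_max xB yB. Qed.

Lemma absvD_lt x y B : absv x < B -> absv y < B -> absv (x + y) < B.
Proof. by move=> xB yB; rewrite (le_lt_trans (absvD_le_max x y)) // gt_max xB yB. Qed.

Lemma absv_sum_le n (F : 'I_n -> K) B : 0 <= B -> (forall i, absv (F i) <= B) ->
  absv (\sum_i F i) <= B.
Proof.
move=> B_ge0 FB; apply: (big_ind (fun s => absv s <= B)) => // [|x y].
  by rewrite absv0.
exact: absvD_le.
Qed.

Lemma absv_sum_lt n (F : 'I_n -> K) B : 0 < B -> (forall i, absv (F i) < B) ->
  absv (\sum_i F i) < B.
Proof.
move=> B_gt0 FB; apply: (big_ind (fun s => absv s < B)) => // [|x y].
  by rewrite absv0.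
exact: absvD_lt.
Qed.

Lemma addr_sum_neq0 y n (F : 'I_n -> K) : y != 0 ->
  (forall i, absv (F i) < absv y) -> y + \sum_i F i != 0.
Proof.
move=> y_neq0 Fy; apply/eqP => /eqP; rewrite addr_eq0 => /eqP y_eq.
have absy_gt0 : 0 < absv y.
  by rewrite lt_def absv_ge0 andbT; apply: contra_neq y_neq0 => /absv_eq0.
by have := absv_sum_lt absy_gt0 Fy; rewrite -absvN -y_eq ltxx.
Qed.

Lemma absv_natr_le1 n : absv n%:R <= 1.
Proof.
elim: n => [|n IHn]; first by rewrite absv0.
by rewrite -addn1 natrD absvD_le // absv1.
Qed.

Lemma absv_p_lt1 : absv p%:R < 1.
Proof. by rewrite absv_p invf_lt1 ?ltr1n ?ltr0n ?prime_gt1 ?prime_gt0. Qed.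

(* Bezout: 1 = c p - b n, and |c p| < 1, so |b n| < 1 is impossible. *)
Lemma absv_coprime n : coprime p n -> absv n%:R = 1.
Proof.
move=> co_pn; have [b _] := Bezoutl n (prime_gt0 p_prime).
rewrite (eqP co_pn) => /dvdnP[c bezout].
have one_eq : 1 = c%:R * p%:R - b%:R * n%:R :> K by rewrite -!natrM -bezout natrD addrK.
apply/eqP; rewrite eq_le absv_natr_le1 leNgt; apply/negP => absn_lt1.
suff : absv (1 : K) < 1 by rewrite absv1 ltxx.
rewrite one_eq absvD_lt // ?absvN absvM.
  by rewrite (le_lt_trans _ absv_p_lt1) // ler_piMl ?absv_ge0 ?absv_natr_le1.
by rewrite (le_lt_trans _ absn_lt1) // ler_piMl ?absv_ge0 ?absv_natr_le1.
Qed.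

Lemma natr_neq0 n : (0 < n)%N -> n%:R != 0 :> K.
Proof.
move=> n_gt0; have [m co_pm ->] := pfactor_coprime p_prime n_gt0.
apply/eqP => /absv_eq0/eqP; apply/negP.
rewrite natrM absvM absv_coprime // mul1r natrX absvX absv_p expf_eq0.
by rewrite invr_eq0 pnatr_eq0 (gtn_eqF (prime_gt0 p_prime)) andbF.
Qed.

Definition near_one (x : K) := absv (x - 1) ^+ p.-1 < p%:R^-1.

Lemma near_one_lt1 x : near_one x -> absv (x - 1) < 1.
Proof.
rewrite /near_one => x_near; rewrite ltNge; apply/negP => x_ge1.
have := exprn_ege1 p.-1 x_ge1; have := absv_p_lt1; rewrite absv_p; lra.
Qed.

Lemma near_one_neq0 x : near_one x -> x != 0.
Proof.
move/near_one_lt1; apply: contraTneq => ->.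
by rewrite sub0r absvN absv1 ltxx.
Qed.

Lemma absv_qnum_le1 x j : absv (x - 1) < 1 -> absv (qnum x j) <= 1.
Proof.
move=> x_lt1; have x_le1 : absv x <= 1.
  by rewrite -(subrK 1 x) absvD_le ?absv1 // ltW.
by apply: absv_sum_le => // i; rewrite absvX exprn_ile1 ?absv_ge0.
Qed.

Lemma near_one_X x e : near_one x -> near_one (x ^+ e).
Proof.
move=> x_near; have x_lt1 := near_one_lt1 x_near.
apply: le_lt_trans x_near; apply: lerXn2r; rewrite ?nnegrE ?absv_ge0 //.
by rewrite -qnum_subr1 absvM ler_piMr ?absv_ge0 ?absv_qnum_le1.
Qed.

(* The terms of [(1 + s)^r - 1 = r s + ...] beyond the first are smaller than [|r|]:
   for [r <> p] because [|r| = 1], for [r = p] because [p] divides the inner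
   binomial coefficients and [|s|^(p-1) < |p|] bounds the last one. *)
Lemma absv_binomial_term_lt s r i : prime r -> near_one (s + 1) -> (i.+2 <= r)%N ->
  absv (s ^+ i.+1 *+ 'C(r, i.+2)) < absv (r%:R : K).
Proof.
move=> r_prime s_near le_i2r.
have s_lt1 := near_one_lt1 s_near; rewrite addrK in s_lt1.
rewrite /near_one addrK in s_near.
have pow_lt1 : absv s ^+ i.+1 < 1 by rewrite exprn_ilt1 ?absv_ge0.
have pow_ge0 : 0 <= absv s ^+ i.+1 by rewrite exprn_ge0 ?absv_ge0.
have bin_ge0 := absv_ge0 ('C(r, i.+2)%:R).
rewrite -mulr_natr absvM absvX.
have [r_eq_p|r_neq_p] := eqVneq r p; last first.
  have bin_le1 := absv_natr_le1 'C(r, i.+2).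
  rewrite (@absv_coprime r) ?prime_coprime ?dvdn_prime2 //; first nra.
  by rewrite eq_sym.
have p_inv_gt0 : 0 < p%:R^-1 :> R by rewrite invr_gt0 ltr0n prime_gt0.
rewrite {}r_eq_p absv_p in le_i2r *.
have [lt_i2p|ge_i2p] := ltnP i.+2 p.
  have /dvdnP[c ->] := prime_dvd_bin (k := i.+2) p_prime lt_i2p.
  have c_ge0 := absv_ge0 (c%:R).
  have cp_le : absv c%:R / p%:R <= p%:R^-1 by rewrite ler_piMl ?absv_natr_le1 // ltW.
  have cp_ge0 : 0 <= absv c%:R / p%:R by rewrite divr_ge0 ?ler0n.
  rewrite natrM absvM absv_p; nra.
have p_eq : p = i.+2 by apply/eqP; rewrite eqn_leq ge_i2p le_i2r.
by rewrite -p_eq binn absv1 mulr1; rewrite {1}p_eq in s_near.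
Qed.

Lemma near_one_prime_root z r : prime r -> near_one z -> z ^+ r = 1 -> z = 1.
Proof.
move=> r_prime z_near zr; apply/eqP/contraT => z_neq1.
have s_neq0 : z - 1 != 0 by rewrite subr_eq0.
have bin_sum : \sum_(i < r) (z - 1) ^+ i *+ 'C(r, i.+1) = 0.
  suff : (z - 1) * \sum_(i < r) (z - 1) ^+ i *+ 'C(r, i.+1) = 0.
    by move/eqP; rewrite mulf_eq0 (negPf s_neq0) => /eqP.
  have := exprD1n (z - 1) r; rewrite subrK zr big_ord_recl expr0 bin0 mulr1n.
  rewrite -[X in X = _]addr0 => /addrI zero_eq; rewrite [RHS]zero_eq mulr_sumr.
  by apply: eq_bigr => i _; rewrite exprS mulrnAr.
case: r r_prime {zr} bin_sum => // r' r_prime.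
rewrite big_ord_recl expr0 bin1 => /eqP; rewrite (negPf (addr_sum_neq0 _ _)) ?natr_neq0 // => i.
by rewrite absv_binomial_term_lt ?subrK // ltnS.
Qed.

Lemma near_one_qnum_neq0 x j : near_one x -> (0 < j)%N -> qnum x j != 0.
Proof.
move=> x_near j_gt0; have [->|x_neq1] := eqVneq x 1.
  rewrite /qnum (eq_bigr (fun=> 1)) => [|i _]; last exact: expr1n.
  by rewrite sumr_const card_ord natr_neq0.
apply/eqP => qnum0.
have xj : x ^+ j = 1 by apply/eqP; rewrite -subr_eq0 -qnum_subr1 qnum0 mulr0.
have [r r_prime [e [xe_neq1 xe_r]]] := root1_prime_order_pow j_gt0 xj x_neq1.
by move/eqP: xe_neq1; apply; apply: near_one_prime_root (near_one_X e x_near) xe_r.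
Qed.

End CpAbsoluteValue.

Theorem mainTheorem2 (R : realType) (K : closedFieldType) (absv : K -> R)
  (p : nat) (q : K) (n : nat) :
  prime p -> odd p -> Cp_like p absv ->
  (* |1 - q|_p < p^{-1/(p-1)}, i.e. |1 - q|_p^(p-1) < 1/p *)
  absv (1 - q) ^+ p.-1 < (p%:R)^-1 ->
  \sum_(m < n.+1) ('C(n, m))%:R * (q - 1) ^+ m * Eq absv p q m =
  \sum_(m < n.+1) \sum_(m <= k < n.+1)
      (q - 1) ^+ k * qbinom q n k * s1q q k m * Eq absv p q m.
Proof.
move=> p_prime _ Cp q_near.
rewrite -(absvN Cp) opprB -/(near_one absv p q) in q_near.
apply: eq_bigr => m _; rewrite (binomial_qstirling_coef (ltn_ord m : (m <= n)%N)) ?mulr_suml //.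
- exact: (near_one_neq0 Cp p_prime q_near).
- by move=> j /andP[j_gt0 _]; apply: (near_one_qnum_neq0 Cp p_prime q_near).
Qed.
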